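(* Let $A$ be an associative algebra, $M$ an $A$-bimodule and $H: A\otimes A\to M$ a Hochschild $2$-cocycle. Let $\{ T_\alpha : M \to A \}_{\alpha \in \Omega}$ be an $H$-twisted $\mathcal{O}$-operator family. Then $(M, \{ \prec_\alpha, \succ_\alpha, \curlyvee_{\alpha, \beta} \}_{\alpha, \beta \in \Omega})$ is an NS-family algebra, where $$u \prec_\alpha v := u \cdot T_\alpha (v), \quad u \succ_\alpha v := T_\alpha (u) \cdot v, \quad u \curlyvee_{\alpha, \beta} v := H (T_\alpha (u), T_\beta (v)), \quad u,v\in M.$$ Further, if $\{ T_\alpha : M \to A \}_{\alpha \in \Omega}$ (an $H$-twisted $\mathcal{O}$-operator family) and $\{ T'_\alpha : M' \to A' \}_{\alpha \in \Omega}$ (an $H'$-twisted $\mathcal{O}$-operator family) are twisted $\mathcal{O}$-operator families and $(\phi, \psi)$ is a morphism between them, then $\psi$ is a morphism between the induced NS-family algebras.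
   Context: $\Omega$ is a semigroup; algebras are over a field $\mathbf{k}$ of characteristic $0$. A Hochschild $2$-cocycle $H: A^{\otimes 2}\to M$ is a bilinear map with $a \cdot H (b, c) - H ( a \cdot b, c)+ H (a, b \cdot c) - H (a, b) \cdot c =0$ for all $a,b,c\in A$. An $H$-twisted $\mathcal{O}$-operator family is a collection of linear maps $\{T_\alpha: M\to A\}_{\alpha\in\Omega}$ with $T_\alpha (u) \cdot T_\beta (v) = T_{\alpha \beta} \big( T_\alpha (u) \cdot v + u \cdot T_\beta (v) + H (T_\alpha (u), T_\beta (v)) \big)$ for all $u,v\in M$, $\alpha,\beta\in\Omega$. A morphism from an $H$-twisted $\mathcal{O}$-operator family $\{T_\alpha: M\to A\}$ to an $H'$-twisted one $\{T'_\alpha: M'\to A'\}$ is a pair $(\phi,\psi)$ with $\phi:A\to A'$ an algebra homomorphism and $\psi:M\to M'$ linear such that $\psi(a\cdot u)=\phi(a)\cdot'\psi(u)$, $\psi(u\cdot a)=\psi(u)\cdot'\phi(a)$, $\phi\circ T_\alpha = T'_\alpha\circ\psi$ for all $\alpha$, and $\psi\circ H = H'\circ(\phi\otimes\phi)$. An NS-family algebra is a vector space $D$ with bilinear maps $\{ \prec_\alpha, \succ_\alpha, \curlyvee_{\alpha, \beta}\}_{\alpha, \beta \in \Omega}$ such that for all $x,y,z\in D$, $\alpha,\beta,\gamma\in\Omega$: (1) $(x \prec_\alpha y) \prec_\beta z = x \prec_{\alpha \beta} ( y \prec_\beta z + y \succ_\alpha z + y \curlyvee_{\alpha, \beta} z)$;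 (2) $(x \succ_\alpha y) \prec_\beta z = x \succ_\alpha (y \prec_\beta z)$; (3) $(x \prec_\beta y + x \succ_\alpha y + x \curlyvee_{\alpha, \beta} y) \succ_{\alpha \beta} z = x \succ_\alpha (y \succ_\beta z)$; (4) $( x \prec_\beta y + x \succ_\alpha y + x \curlyvee_{\alpha, \beta} y ) \curlyvee_{\alpha \beta, \gamma} z + (x \curlyvee_{\alpha, \beta} y) \prec_\gamma z = x \succ_\alpha (y \curlyvee_{\beta, \gamma} z) + x \curlyvee_{\alpha, \beta \gamma} ( y \prec_\gamma z + y \succ_\beta z + y \curlyvee_{\beta, \gamma} z )$. A morphism of NS-family algebras is a linear map preserving all $\prec_\alpha$, $\succ_\alpha$, $\curlyvee_{\alpha,\beta}$. *)

From mathcomp Require Import all_boot all_order all_algebra.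
Set Implicit Arguments. Unset Strict Implicit. Unset Printing Implicit Defensive.
Import GRing.Theory.
Local Open Scope ring_scope.

Section Defs.
Variable k : fieldType.

Definition lin_map (U V : lmodType k) (f : U -> V) : Prop :=
  forall (a : k) (x y : U), f (a *: x + y) = a *: f x + f y.

Definition bilin_map (U V W : lmodType k) (f : U -> V -> W) : Prop :=
  (forall u, lin_map (f u)) /\ (forall v, lin_map (fun u => f u v)).

Definition is_assoc_algebra (A : lmodType k) (mul : A -> A -> A) : Prop :=
  bilin_map mul /\ associative mul.

Definition is_bimodule (A : lmodType k) (mul : A -> A -> A) (M : lmodType k)
  (lact : A -> M -> M) (ract : M -> A -> M) : Prop :=
  [/\ bilin_map lact, bilin_map ract,
      (forall a b u, lact (mul a b) u = lact a (lact b u)),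
      (forall u a b, ract u (mul a b) = ract (ract u a) b) &
      (forall a u b, ract (lact a u) b = lact a (ract u b))].

Definition is_hoch_2cocycle (A : lmodType k) (mul : A -> A -> A) (M : lmodType k)
  (lact : A -> M -> M) (ract : M -> A -> M) (H : A -> A -> M) : Prop :=
  bilin_map H /\
  forall a b c, lact a (H b c) - H (mul a b) c + H a (mul b c) - ract (H a b) c = 0.

Definition is_twisted_O_family (Om : Type) (op : Om -> Om -> Om)
  (A : lmodType k) (mul : A -> A -> A) (M : lmodType k)
  (lact : A -> M -> M) (ract : M -> A -> M) (H : A -> A -> M)
  (T : Om -> M -> A) : Prop :=
  (forall al, lin_map (T al)) /\
  forall al be u v,
    mul (T al u) (T be v) =
    T (op al be) (lact (T al u) v + ract u (T be v) + H (T al u) (T be v)).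

Definition is_twisted_O_family_morphism (Om : Type)
  (A : lmodType k) (mul : A -> A -> A) (M : lmodType k)
  (lact : A -> M -> M) (ract : M -> A -> M) (H : A -> A -> M) (T : Om -> M -> A)
  (A' : lmodType k) (mul' : A' -> A' -> A') (M' : lmodType k)
  (lact' : A' -> M' -> M') (ract' : M' -> A' -> M') (H' : A' -> A' -> M')
  (T' : Om -> M' -> A') (phi : A -> A') (psi : M -> M') : Prop :=
  [/\ lin_map phi /\ (forall a b, phi (mul a b) = mul' (phi a) (phi b)),
      lin_map psi,
      (forall a u, psi (lact a u) = lact' (phi a) (psi u)) /\
      (forall u a, psi (ract u a) = ract' (psi u) (phi a)),
      (forall al u, phi (T al u) = T' al (psi u)) &
      (forall a b, psi (H a b) = H' (phi a) (phi b))].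

Definition is_NS_family_algebra (Om : Type) (op : Om -> Om -> Om) (D : lmodType k)
  (prec succ : Om -> D -> D -> D) (curly : Om -> Om -> D -> D -> D) : Prop :=
  [/\ (forall al, bilin_map (prec al)) /\ (forall al, bilin_map (succ al)) /\
      (forall al be, bilin_map (curly al be)),
      (forall x y z al be,
         prec be (prec al x y) z =
         prec (op al be) x (prec be y z + succ al y z + curly al be y z)),
      (forall x y z al be,
         prec be (succ al x y) z = succ al x (prec be y z)),
      (forall x y z al be,
         succ (op al be) (prec be x y + succ al x y + curly al be x y) z =
         succ al x (succ be y z)) &
      (forall x y z al be ga,
         curly (op al be) ga (prec be x y + succ al x y + curly al be x y) z
         + prec ga (curly al be x y) z =
         succ al x (curly be ga y z)
         + curly al (op be ga) x (prec ga y z + succ be y z + curly be ga y z))].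

Definition is_NS_family_morphism (Om : Type) (D : lmodType k)
  (prec succ : Om -> D -> D -> D) (curly : Om -> Om -> D -> D -> D)
  (D' : lmodType k)
  (prec' succ' : Om -> D' -> D' -> D') (curly' : Om -> Om -> D' -> D' -> D')
  (f : D -> D') : Prop :=
  [/\ lin_map f,
      (forall al x y, f (prec al x y) = prec' al (f x) (f y)),
      (forall al x y, f (succ al x y) = succ' al (f x) (f y)) &
      (forall al be x y, f (curly al be x y) = curly' al be (f x) (f y))].

Definition ind_prec (Om : Type) (A M : lmodType k) (ract : M -> A -> M)
  (T : Om -> M -> A) (al : Om) (u v : M) : M := ract u (T al v).
Definition ind_succ (Om : Type) (A M : lmodType k) (lact : A -> M -> M)
  (T : Om -> M -> A) (al : Om) (u v : M) : M := lact (T al u) v.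
Definition ind_curly (Om : Type) (A M : lmodType k) (H : A -> A -> M)
  (T : Om -> M -> A) (al be : Om) (u v : M) : M := H (T al u) (T be v).

End Defs.

From mathcomp Require Import all_boot all_order all_algebra.
Import GRing.Theory.
Set Implicit Arguments. Unset Strict Implicit. Unset Printing Implicit Defensive.
Local Open Scope ring_scope.

(* The twisted O-operator identity says exactly that each T_(al) turns the sum
   u <_be v + u >_al v + u Y_(al,be) v into the product T_al u * T_be v.
   Rewriting with it, the first three NS axioms become the associativity
   axioms of the bimodule, and the fourth becomes the Hochschild cocycle
   identity evaluated at (T_al x, T_be y, T_ga z). *)

Lemma lin_map_comp (k : fieldType) (U V W : lmodType k) (f : U -> V) (g : V -> W) :
  lin_map f -> lin_map g -> lin_map (g \o f).
Proof. by move=> lf lg a x y; rewrite /= lf lg. Qed.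

Lemma hoch_2cocycleE (k : fieldType) (A : lmodType k) (mul : A -> A -> A)
    (M : lmodType k) (lact : A -> M -> M) (ract : M -> A -> M) (H : A -> A -> M) :
  is_hoch_2cocycle mul lact ract H ->
  forall a b c, H (mul a b) c + ract (H a b) c = lact a (H b c) + H a (mul b c).
Proof.
move=> [_ coc] a b c; have /subr0_eq <- := coc a b c.
by rewrite addrCA addrA subrK.
Qed.

Section InducedNSFamily.
Variables (k : fieldType) (Om : Type) (op : Om -> Om -> Om).
Variables (A : lmodType k) (mul : A -> A -> A) (M : lmodType k).
Variables (lact : A -> M -> M) (ract : M -> A -> M) (H : A -> A -> M).
Variable T : Om -> M -> A.
Hypothesis bimodM : is_bimodule mul lact ract.
Hypothesis cocycleH : is_hoch_2cocycle mul lact ract H.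
Hypothesis twistedT : is_twisted_O_family op mul lact ract H T.

Local Notation prec := (ind_prec ract T).
Local Notation succ := (ind_succ lact T).
Local Notation curly := (ind_curly H T).

Lemma ind_O_family_mul al be u v :
  mul (T al u) (T be v) = T (op al be) (prec be u v + succ al u v + curly al be u v).
Proof. by rewrite twistedT.2 /ind_prec /ind_succ (addrC (ract _ _)). Qed.

Lemma ind_prec_bilin al : bilin_map (prec al).
Proof.
have [_ [ract_linr ract_linl] _ _ _] := bimodM.
split=> [u | v]; last exact: (ract_linl (T al v)).
exact: lin_map_comp (twistedT.1 al) (ract_linr u).
Qed.

Lemma ind_succ_bilin al : bilin_map (succ al).
Proof.
have [[lact_linr lact_linl] _ _ _ _] := bimodM.
split=> [u | v]; first exact: (lact_linr (T al u)).
exact: lin_map_comp (twistedT.1 al) (lact_linl v).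
Qed.

Lemma ind_curly_bilin al be : bilin_map (curly al be).
Proof.
have [[H_linr H_linl] _] := cocycleH.
split=> [u | v].
- exact: lin_map_comp (twistedT.1 be) (H_linr _).
- exact: lin_map_comp (twistedT.1 al) (H_linl _).
Qed.

Lemma ind_precA x y z al be :
  prec be (prec al x y) z = prec (op al be) x (prec be y z + succ al y z + curly al be y z).
Proof.
have [_ _ _ ract_mul _] := bimodM.
by rewrite /ind_prec -ind_O_family_mul ract_mul.
Qed.

Lemma ind_succ_prec x y z al be : prec be (succ al x y) z = succ al x (prec be y z).
Proof. by have [_ _ _ _ lact_ract] := bimodM; exact: lact_ract. Qed.

Lemma ind_succA x y z al be :
  succ (op al be) (prec be x y + succ al x y + curly al be x y) z = succ al x (succ be y z).
Proof.
have [_ _ lact_mul _ _] := bimodM.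
by rewrite /ind_succ -ind_O_family_mul lact_mul.
Qed.

Lemma ind_curly_cocycle x y z al be ga :
  curly (op al be) ga (prec be x y + succ al x y + curly al be x y) z
  + prec ga (curly al be x y) z =
  succ al x (curly be ga y z)
  + curly al (op be ga) x (prec ga y z + succ be y z + curly be ga y z).
Proof.
have := hoch_2cocycleE cocycleH (T al x) (T be y) (T ga z).
by rewrite !ind_O_family_mul.
Qed.

Lemma ind_NS_family_algebra : is_NS_family_algebra op prec succ curly.
Proof.
split; [| exact: ind_precA | exact: ind_succ_prec | exact: ind_succA
       | exact: ind_curly_cocycle].
by split; [exact: ind_prec_bilin | split; [exact: ind_succ_bilin | exact: ind_curly_bilin]].
Qed.

End InducedNSFamily.

Lemma ind_NS_family_morphism (k : fieldType) (Om : Type)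
    (A : lmodType k) (mul : A -> A -> A) (M : lmodType k)
    (lact : A -> M -> M) (ract : M -> A -> M) (H : A -> A -> M) (T : Om -> M -> A)
    (A' : lmodType k) (mul' : A' -> A' -> A') (M' : lmodType k)
    (lact' : A' -> M' -> M') (ract' : M' -> A' -> M') (H' : A' -> A' -> M')
    (T' : Om -> M' -> A') (phi : A -> A') (psi : M -> M') :
  is_twisted_O_family_morphism mul lact ract H T mul' lact' ract' H' T' phi psi ->
  is_NS_family_morphism (ind_prec ract T) (ind_succ lact T) (ind_curly H T)
    (ind_prec ract' T') (ind_succ lact' T') (ind_curly H' T') psi.
Proof.
move=> [_ lin_psi [psi_lact psi_ract] psi_T psi_H]; split=> //.
- by move=> al x y; rewrite /ind_prec psi_ract psi_T.
- by move=> al x y; rewrite /ind_succ psi_lact psi_T.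
- by move=> al be x y; rewrite /ind_curly psi_H !psi_T.
Qed.

Theorem proposition3p18 (k : fieldType) (char0 : [pchar k] =i pred0)
  (Om : Type) (op : Om -> Om -> Om) (op_assoc : associative op) :
  (forall (A : lmodType k) (mul : A -> A -> A) (M : lmodType k)
          (lact : A -> M -> M) (ract : M -> A -> M) (H : A -> A -> M)
          (T : Om -> M -> A),
     is_assoc_algebra mul -> is_bimodule mul lact ract ->
     is_hoch_2cocycle mul lact ract H ->
     is_twisted_O_family op mul lact ract H T ->
     is_NS_family_algebra op (ind_prec ract T) (ind_succ lact T) (ind_curly H T))
  /\
  (forall (A : lmodType k) (mul : A -> A -> A) (M : lmodType k)
          (lact : A -> M -> M) (ract : M -> A -> M) (H : A -> A -> M)
          (T : Om -> M -> A)
          (A' : lmodType k) (mul' : A' -> A' -> A') (M' : lmodType k)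
          (lact' : A' -> M' -> M') (ract' : M' -> A' -> M') (H' : A' -> A' -> M')
          (T' : Om -> M' -> A') (phi : A -> A') (psi : M -> M'),
     is_assoc_algebra mul -> is_bimodule mul lact ract ->
     is_hoch_2cocycle mul lact ract H ->
     is_twisted_O_family op mul lact ract H T ->
     is_assoc_algebra mul' -> is_bimodule mul' lact' ract' ->
     is_hoch_2cocycle mul' lact' ract' H' ->
     is_twisted_O_family op mul' lact' ract' H' T' ->
     is_twisted_O_family_morphism mul lact ract H T mul' lact' ract' H' T' phi psi ->
     is_NS_family_morphism (ind_prec ract T) (ind_succ lact T) (ind_curly H T)
       (ind_prec ract' T') (ind_succ lact' T') (ind_curly H' T') psi).
Proof.
split.
- move=> A mul M lact ract H T _ bimodM cocycleH twistedT.
  exact: ind_NS_family_algebra bimodM cocycleH twistedT.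
- move=> A mul M lact ract H T A' mul' M' lact' ract' H' T' phi psi.
  by do 8!move=> _; exact: ind_NS_family_morphism.
Qed.
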